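(* Let $n\ge1$ and $1\le p\le 2n$. Then $v_p>0$.
   Context: $k$ is a field of characteristic zero, $\mathcal O_n=k[x]/(x^{n+1})$, elements of $\mathcal O_n$ identified with multiplication operators, $\operatorname{ad}_x(\delta)=x\delta-\delta x$. The order filtration is $\mathcal D^p(\mathcal O_n)=\{\delta\in\operatorname{End}_k(\mathcal O_n):[f_0,[f_1,\dots,[f_p,\delta]\dots]]=0\ \forall f_i\in\mathcal O_n\}$. For $\delta\in\mathcal D^p(\mathcal O_n)$, $\operatorname{ad}_x^p(\delta)$ is multiplication by an element of $\mathcal O_n$ and $\operatorname{ad}_x^p:\mathcal D^p(\mathcal O_n)\to\mathcal O_n$ is $\mathcal O_n$-linear, so its image is an ideal $(x^{v_p})$ of $\mathcal O_n$; $v_p\in\{0,\dots,n\}$ denotes the corresponding exponent. *)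

From HB Require Import structures.
From mathcomp Require Import all_boot all_order all_algebra.
Set Implicit Arguments. Unset Strict Implicit. Unset Printing Implicit Defensive.
Import GRing.Theory.
Local Open Scope ring_scope.

(* O_n = k[x]/(x^(n+1)) is modelled as the k-vector space k^(n+1) of
   coefficient vectors (a_0, ..., a_n) : 'rV[k]_(n.+1), a = sum a_i x^i.
   k-linear endomorphisms of O_n are (n+1)x(n+1) matrices acting on
   column coefficient vectors. *)

Definition mulop (k : fieldType) (n : nat) (a : 'rV[k]_(n.+1)) : 'M[k]_(n.+1) :=
  \matrix_(i, j) (if (j <= i)%N then a 0 (inord (i - j)) else 0).

Definition xelt (k : fieldType) (n : nat) : 'rV[k]_(n.+1) :=
  \row_(i < n.+1) (if (i == 1%N :> nat) then 1 else 0).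

Definition comm (k : fieldType) (n : nat) (A B : 'M[k]_(n.+1)) : 'M[k]_(n.+1) :=
  A * B - B * A.

Definition itcomm (k : fieldType) (n : nat) (fs : seq 'rV[k]_(n.+1))
  (delta : 'M[k]_(n.+1)) : 'M[k]_(n.+1) :=
  foldr (fun f d => comm (mulop f) d) delta fs.

Definition in_Dp (k : fieldType) (n p : nat) (delta : 'M[k]_(n.+1)) : Prop :=
  forall fs : seq 'rV[k]_(n.+1), size fs = p.+1 -> itcomm fs delta = 0.

Definition adx (k : fieldType) (n : nat) (delta : 'M[k]_(n.+1)) : 'M[k]_(n.+1) :=
  comm (mulop (xelt k n)) delta.

From mathcomp Require Import all_boot all_order all_algebra.
Local Open Scope ring_scope.
Import GRing.Theory.

(* For p >= 1, ad_x^p(delta) is a commutator, hence traceless, whereas the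
   multiplication operator by a has trace (n+1) a_0.  In characteristic zero
   this forces a_0 = 0. *)

Lemma mxtrace_comm (k : fieldType) (n : nat) (A B : 'M[k]_(n.+1)) :
  \tr (comm A B) = 0.
Proof. by rewrite /comm linearB /= -!mulmxE mxtrace_mulC subrr. Qed.

Lemma mxtrace_iter_adx (k : fieldType) (n p : nat) (delta : 'M[k]_(n.+1)) :
  (0 < p)%N -> \tr (iter p (@adx k n) delta) = 0.
Proof. by case: p => // p _; rewrite iterS mxtrace_comm. Qed.

Lemma mxtrace_mulop (k : fieldType) (n : nat) (a : 'rV[k]_(n.+1)) :
  \tr (mulop a) = n.+1%:R * a 0 0.
Proof.
rewrite /mxtrace (eq_bigr (fun _ => a 0 0)) ?sumr_const ?card_ord ?mulr_natl //.
move=> i _; rewrite mxE leqnn subnn.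
by congr (a _ _); apply: val_inj; rewrite /= inordK.
Qed.

Theorem lemma5 (k : fieldType) (hk : [pchar k] =i pred0) (n p : nat) :
  (1 <= n)%N -> (1 <= p)%N -> (p <= 2 * n)%N ->
  forall (delta : 'M[k]_(n.+1)), in_Dp p delta ->
  forall a : 'rV[k]_(n.+1), iter p (@adx k n) delta = mulop a ->
  a 0 0 = 0.
Proof.
move=> _ p_gt0 _ delta _ a ad_delta.
have /eqP : n.+1%:R * a 0 0 = 0 :> k.
  by rewrite -mxtrace_mulop -ad_delta mxtrace_iter_adx.
by rewrite mulf_eq0 (pcharf0P k).1 // => /eqP.
Qed.
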